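(* Let $\Omega\subset\mathbb R^n$ be open, $v\colon\Omega\to\mathbb R^n$ a $C^1$ vector field with local flow $\phi$, let $e_1,\dots,e_r\colon\Omega\to\mathbb R$ be continuous, and $E=\bigcap_{k=1}^r\{x\in\Omega: e_k(x)\le0\}$. Suppose that for some (possibly empty) closed subsets $Z_k\subset\partial E$, $k=1,\dots,r$: (a) for each $k$, there is an open neighborhood $W_k$ of the set $\{e_k=0\}\cap\partial E\setminus Z_k$ such that $e_k|_{W_k}$ is a curvature bound function for $v$; (b) $Z_k\subset E^-\cup E^+$ for each $k$. Then $E$ is a bound set for $v$.
   Context: $\phi$ is the local dynamical system generated by $v$: $t\mapsto\phi_t(x_0)$ is the maximal solution of $\dot x=v(x)$ with $x(0)=x_0$. For $E\subset\Omega$, $E^+=\{x\in E:\ \phi_{-\epsilon_n}(x)\notin E$ for some sequence $0<\epsilon_n\to0\}$ (entrance set) and $E^-=\{x\in E:\ \phi_{\epsilon_n}(x)\notin E$ for some sequence $0<\epsilon_n\to0\}$ (exit set); $\partial E$ is the boundary of $E$ in $\Omega$. A closed set $E\subset\Omega$ is a bound set for $v$ if for every $\epsilon>0$ there is no $x\in\partial E$ with $\phi_t(x)\in E$ for all $t\in(-\epsilon,\epsilon)$. For $W\subset\Omega$ open, a $C^2$ function $e\colon W\to\mathbb R$ is a curvature bound function for $v$ if for every $x\in W$ with $e(x)=0$: $De(x)v(x)=0$ implies $v(x)^TD^2e(x)v(x)+De(x)Dv(x)v(x)>0$ ($De$ derivative, $D^2e$ Hessian, $Dv$ Jacobian). 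*)

From HB Require Import structures.
From mathcomp Require Import all_boot all_order all_algebra.
From mathcomp Require Import all_classical all_reals all_analysis.
Set Implicit Arguments. Unset Strict Implicit. Unset Printing Implicit Defensive.
Import Order.TTheory GRing.Theory Num.Theory.
Import numFieldNormedType.Exports.
Local Open Scope classical_set_scope.
Local Open Scope ring_scope.

Section Defs.
Variables (R : realType) (n : nat).
Notation V := 'rV[R]_n.

(* interior and boundary of E relative to the open set Om (for Om open,
   the relative interior coincides with the interior in R^n) *)
Definition closed_in (Om E : set V) : Prop :=
  E `<=` Om /\ closure E `&` Om `<=` E.

Definition boundary_in (Om E : set V) : set V :=
  (closure E `&` Om) `\` interior E.

(* f : V -> W is C^1 on the open set U: differentiable at every point of U,
   with derivative depending continuously on the point (tested on each
   direction, which is equivalent in finite dimension). *)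
Definition C1_on (W : normedModType R) (U : set V) (f : V -> W) : Prop :=
  (forall x, U x -> differentiable f x) /\
  (forall u : V, forall x, U x -> {for x, continuous (fun y => 'd f y u)}).

Definition C2_on (U : set V) (f : V -> R) : Prop :=
  C1_on U f /\ forall u : V, C1_on U (fun y => 'd f y u).

Definition curvature_bound_fun (v : V -> V) (W : set V) (e : V -> R) : Prop :=
  open W /\ C2_on W e /\
  forall x, W x -> e x = 0 -> 'd e x (v x) = 0 ->
    'd (fun y => 'd e y (v x)) x (v x) + 'd e x ('d v x (v x)) > 0.

Definition ode_solution (Om : set V) (v : V -> V) (a b : R) (gam : R -> V)
  : Prop :=
  forall t, a < t < b -> Om (gam t) /\ is_derive t 1 gam (v (gam t)).

(* flow_at Om v t x y :  phi_t(x) is defined and equals y, where phi is the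
   local flow (maximal solutions) of v on Om: the maximal solution through x
   is the union of all solutions through x, so phi_t(x) is defined iff some
   solution on an open interval containing 0 and t passes through x at time 0,
   and then phi_t(x) is its value at t (uniqueness holds since v is C^1). *)
Definition flow_at (Om : set V) (v : V -> V) (t : R) (x y : V) : Prop :=
  exists a b (gam : R -> V), [/\ a < 0 < b, a < t < b, ode_solution Om v a b gam,
    gam 0 = x & gam t = y].

Definition flow_in (Om : set V) (v : V -> V) (t : R) (x : V) (E : set V) :=
  exists y, flow_at Om v t x y /\ E y.

Definition flow_out (Om : set V) (v : V -> V) (t : R) (x : V) (E : set V) :=
  exists y, flow_at Om v t x y /\ ~ E y.

Definition entrance_set (Om : set V) (v : V -> V) (E : set V) : set V :=
  [set x | E x /\ exists eps : nat -> R, [/\ forall m, 0 < eps m,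
     eps m @[m --> \oo] --> 0 & forall m, flow_out Om v (- eps m) x E]].

Definition exit_set (Om : set V) (v : V -> V) (E : set V) : set V :=
  [set x | E x /\ exists eps : nat -> R, [/\ forall m, 0 < eps m,
     eps m @[m --> \oo] --> 0 & forall m, flow_out Om v (eps m) x E]].

Definition bound_set (Om : set V) (v : V -> V) (E : set V) : Prop :=
  closed_in Om E /\
  forall eps : R, 0 < eps -> ~ exists x, boundary_in Om E x /\
    forall t, - eps < t < eps -> flow_in Om v t x E.

End Defs.

From HB Require Import structures.
From mathcomp Require Import all_boot all_order all_algebra.
From mathcomp Require Import all_classical all_reals all_analysis.
From mathcomp Require Import lra.
Set Implicit Arguments. Unset Strict Implicit. Unset Printing Implicit Defensive.
Import Order.TTheory GRing.Theory Num.Theory.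
Import numFieldNormedType.Exports.
Local Open Scope classical_set_scope.
Local Open Scope ring_scope.

(* E is closed because the e_k are continuous.  Let x be a boundary point whose
   trajectory stays in E for |t| < eps.  If x lies in some Z_k, it is an exit or
   entrance point, so phi_t(x) leaves E for arbitrarily small |t|; this contradicts
   the uniqueness of solutions (v is C^1, hence locally Lipschitz, Gronwall gives
   local uniqueness, and connectedness of intervals propagates it).  Otherwise some
   e_k vanishes at x and x lies in W_k.  Then f(t) = e_k(phi_t(x)) has a local
   maximum 0 at t = 0, so f'(0) = De_k(x) v(x) = 0 and f''(0) <= 0, whereas the
   curvature condition says f''(0) = v^T D^2e_k v + De_k Dv v > 0. *)

Section matrix_valued_curves.
Context {R : realType} {m n : nat}.
Notation M := 'M[R]_(m, n).

Lemma mx_norm_entry_le (x : M) i j : `|x i j| <= `|x|.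
Proof.
rewrite [leRHS]/Num.Def.normr /= mx_normrE.
exact: le_trans (le_bigmax _ _ (i, j)).
Qed.

Lemma mx_norm_le (x : M) (K : R) :
  0 <= K -> (forall i j, `|x i j| <= K) -> `|x| <= K.
Proof.
move=> K0 xK; rewrite [leLHS]/Num.Def.normr /= mx_normrE.
by rewrite (bigmax_le _ K0) //= => -[i j] _; exact: xK.
Qed.

Lemma is_derive_mx_entry (g : R -> M) (t : R) (dg : M) i j :
  is_derive t 1 g dg -> is_derive t 1 (fun s => g s i j) (dg i j).
Proof.
move=> [gt <-]; have /derivable_mxP/(_ i j) gijt := gt.
by apply: DeriveDef => //; rewrite derive_mx // mxE.
Qed.

(* For the max norm, the bound follows from the scalar mean value theorem entrywise. *)
Lemma mx_lipschitz_of_deriv_bounded (g dg : R -> M) (a b K : R) :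
  {within `[a, b], continuous g} ->
  (forall t, t \in `]a, b[ -> is_derive t 1 g (dg t)) ->
  (forall t, t \in `]a, b[ -> `|dg t| <= K) ->
  K.-lipschitz_(`[a, b]) g.
Proof.
move=> gC gD gK [x y] /= [xab yab].
wlog xy : x y xab yab / x < y.
  move=> wlog_xy; have [xy|yx|->] := ltgtP x y; first exact: wlog_xy.
    by rewrite distrC [`|x - y|]distrC; exact: wlog_xy.
  by rewrite !subrr !normr0 mulr0.
have sub_itv : `]x, y[ `<=` `]a, b[.
  by apply: subset_itv; rewrite bnd_simp ?(itvP xab) ?(itvP yab).
have K0 : 0 <= K by apply: le_trans (gK _ (sub_itv _ (mid_in_itvoo xy))).
rewrite distrC ltr0_norm ?subr_lt0 // opprB.
apply: mx_norm_le => [|i j]; first by rewrite mulr_ge0 // subr_ge0 ltW.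
have gxyC : {within `[x, y], continuous g}.
  by apply: continuous_subspaceW gC; apply: subset_itv; rewrite bnd_simp ?(itvP xab) ?(itvP yab).
have gijC : {within `[x, y], continuous (fun s => g s i j)}.
  by move=> s; exact: continuous_comp (gxyC s) (@coord_continuous _ _ _ i j _).
have gijD t : t \in `]x, y[ -> is_derive t 1 (fun s => g s i j) (dg t i j).
  by move=> txy; apply: is_derive_mx_entry; exact/gD/sub_itv.
have [c cxy] := MVT xy gijD gijC.
rewrite !mxE => ->; rewrite normrM [`|y - x|]gtr0_norm ?subr_gt0 //.
apply: ler_wpM2r; first by rewrite subr_ge0 ltW.
exact: le_trans (mx_norm_entry_le _ i j) (gK _ (sub_itv _ cxy)).
Qed.

Lemma deriv_dominated_eq0_near (D dD : R -> M) (s L : R) :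
  0 <= L -> D s = 0 ->
  (\forall u \near s, is_derive (u : R) 1 D (dD u) /\ `|dD u| <= L * `|D u|) ->
  \forall u \near s, D u = 0.
Proof.
move=> L0 Ds0 /nbhs_ballP[d d0 Dd].
pose h := Num.min (d / 2) (L + 1)^-1.
have L1 : 0 < L + 1 by rewrite ltr_wpDl.
have h0 : 0 < h by rewrite lt_min divr_gt0 //= invr_gt0.
have hd : h < d by rewrite gt_min ltr_pdivrMr // ltr_pMr ?ltr1n.
have hL : h * L < 1.
  apply: le_lt_trans (_ : (L + 1)^-1 * L < 1); first by rewrite ler_wpM2r // ge_min lexx orbT.
  by rewrite mulrC ltr_pdivrMr // mul1r ltrDl.
have Dd_itv (u : R) : u \in `[s - h, s + h] -> is_derive u 1 D (dD u) /\ `|dD u| <= L * `|D u|.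
  move=> uh; apply: Dd; rewrite -ball_normE /= ltr_norml.
  by move: uh; rewrite in_itv /= => /andP[? ?]; apply/andP; split; lra.
have DC : {within `[s - h, s + h], continuous D}.
  by apply: derivable_within_continuous => u /Dd_itv[[]].
have [c ch cmax] : exists2 c, c \in `[s - h, s + h] &
    forall u, u \in `[s - h, s + h] -> `|D u| <= `|D c|.
  apply: EVT_max; first lra.
  by move=> u; apply: continuous_comp (DC u) (@norm_continuous _ _ _).
have Dlip : (L * `|D c|).-lipschitz_(`[s - h, s + h]) D.
  apply: (mx_lipschitz_of_deriv_bounded (dg := dD) DC) => u /subset_itv_oo_cc uh.
    by have [] := Dd_itv u uh.
  by have [_ /le_trans] := Dd_itv u uh; apply; rewrite ler_wpM2l // cmax.
(* On [s - h, s + h] the maximum of |D| is at most h L times itself. *)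
have Dc0 : `|D c| = 0.
  have sh : s \in `[s - h, s + h] by rewrite in_itv /=; apply/andP; split; lra.
  have := @Dlip (c, s) (conj ch sh); rewrite /= Ds0 subr0 => Dc_le.
  have cs : `|c - s| <= h.
    by rewrite ler_norml; move: ch; rewrite in_itv /= => /andP[? ?]; apply/andP; split; lra.
  have LM0 : 0 <= L * `|D c| by rewrite mulr_ge0.
  apply/eqP; rewrite eq_le normr_ge0 andbT; nra.
apply/nbhs_ballP; exists h => // u; rewrite -ball_normE /= => su.
apply/normr0_eq0/eqP; rewrite eq_le normr_ge0 andbT -Dc0 cmax //.
by rewrite in_itv /=; move: su; rewrite ltr_norml => /andP[? ?]; apply/andP; split; lra.
Qed.

End matrix_valued_curves.

Lemma ball_segment (R : realFieldType) (W : normedModType R) (y a b : W) (r t : R) :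
  0 <= t <= 1 -> `|y - a| < r -> `|y - b| < r -> `|y - (b + t *: (a - b))| < r.
Proof.
move=> /andP[t0 t1] ya yb.
have -> : y - (b + t *: (a - b)) = t *: (y - a) + (1 - t) *: (y - b).
  rewrite scalerBl scale1r addrCA -scalerBr opprB [y - a + _]addrC subrKA.
  by rewrite opprD addrA -scalerN opprB.
apply: le_lt_trans (ler_normD _ _) _.
rewrite !normrZ ger0_norm // ger0_norm ?subr_ge0 //.
by case: (lerP `|y - a| `|y - b|) => ?; nra.
Qed.

Section C1_fields.
Context {R : realType} {n : nat}.
Notation V := 'rV[R]_n.

Lemma is_derive_comp_differentiable (U W : normedModType R) (g : R -> U) (f : U -> W)
    (s : R) (dg : U) :
  is_derive s 1 g dg -> differentiable f (g s) ->
  is_derive s 1 (f \o g) ('d f (g s) dg).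
Proof.
move=> [gs <-] fgs; have gsD : differentiable g s by apply/derivable1_diffP.
have fgD : differentiable (f \o g) s by exact: differentiable_comp.
apply: DeriveDef; first exact/derivable1_diffP.
by rewrite !deriveE // diff_comp.
Qed.

Lemma is_derive_affine (U : normedModType R) (b c : U) (t : R) :
  is_derive t 1 (fun s : R => b + s *: c) c.
Proof.
have lineD : is_derive t 1 (fun s : R => s *: c) c.
  apply: DeriveDef; first exact: diff_derivable.
  by rewrite deriveE // diff_val scale1r.
by have := is_deriveD (is_derive_cst b t 1) lineD; rewrite add0r.
Qed.

(* C1_on only gives continuity direction by direction: decompose w in the standard basis. *)
Lemma C1_on_diff_bounded_near (W : normedModType R) (Om : set V) (f : V -> W) (y : V) :
  open Om -> C1_on Om f -> Om y ->
  exists2 L, 0 <= L & \forall z \near y, Om z /\ forall w, `|'d f z w| <= L * `|w|.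
Proof.
move=> Om_open [_ fC] Omy.
pose C j := `|'d f y (delta_mx 0 j)| + 1.
have C_bound j : \forall z \near y, `|'d f z (delta_mx 0 j)| <= C j.
  near=> z; rewrite -[X in `|X|](addrNK ('d f y (delta_mx 0 j))).
  rewrite (le_trans (ler_normD _ _)) // addrC lerD2l distrC ltW //.
  by near: z; exact: cvgr_dist_lt (fC _ y Omy) _ ltr01.
exists (\sum_j C j); first by apply: sumr_ge0 => j _; rewrite addr_ge0.
near=> z; split; first by near: z; exact: Om_open.
have zC j : `|'d f z (delta_mx 0 j)| <= C j.
  by move: j; near: z; apply: filter_forall => j; exact: C_bound.
move=> w; rewrite {1}(row_sum_delta w) linear_sum mulr_suml /=.
apply: le_trans (ler_norm_sum _ _ _) _; apply: ler_sum => j _.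
by rewrite linearZ normrZ mulrC ler_pM // mx_norm_entry_le.
Unshelve. all: by end_near.
Qed.

Lemma C1_on_locally_lipschitz p q (Om : set V) (f : V -> 'M[R]_(p, q)) (y : V) :
  open Om -> C1_on Om f -> Om y ->
  exists2 L, 0 <= L & exists2 r, 0 < r & ball y r `<=` Om /\ L.-lipschitz_(ball y r) f.
Proof.
move=> Om_open fC1 Omy.
have [L L0 /nbhs_ballP[r r0 ball_bd]] := C1_on_diff_bounded_near Om_open fC1 Omy.
exists L => //; exists r => //; split; first by move=> z /ball_bd[].
move=> [a b] /= [ya yb].
pose s t := b + t *: (a - b).
have s_ball (t : R) : t \in `[0, 1] -> ball y r (s t).
  move: ya yb; rewrite !mx_norm_ball /ball_ => ya yb t01.
  by apply: ball_segment => //; rewrite -in_itv.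
have fsD (t : R) : t \in `[0, 1] -> is_derive t 1 (f \o s) ('d f (s t) (a - b)).
  move=> /s_ball /ball_bd[Omst _].
  exact: is_derive_comp_differentiable (is_derive_affine _ _ _) (fC1.1 _ Omst).
have fs_cont : {within `[0, 1], continuous (f \o s)}.
  by apply: derivable_within_continuous => t /fsD [].
have fs_bd (t : R) : t \in `]0, 1[ -> `|'d f (s t) (a - b)| <= L * `|a - b|.
  by move=> /subset_itv_oo_cc /s_ball /ball_bd[_]; apply.
have fsD' (t : R) : t \in `]0, 1[ -> is_derive t 1 (f \o s) ('d f (s t) (a - b)).
  by move=> /subset_itv_oo_cc; exact: fsD.
have in01 : (`[0, 1] `*` `[0, 1]) ((1 : R), (0 : R)).
  by split; rewrite /= in_itv /= ?lexx ?ler01.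
have := mx_lipschitz_of_deriv_bounded fs_cont fsD' fs_bd in01.
by rewrite /s /= scale1r scale0r addr0 [b + _]addrC subrK subr0 normr1 mulr1.
Qed.
End C1_fields.

Section flow_uniqueness.
Context {R : realType} {n : nat}.
Notation V := 'rV[R]_n.
Variables (Om : set V) (v : V -> V).
Hypotheses (Om_open : open Om) (vC1 : C1_on Om v).

Lemma ode_solution_continuous a b g t :
  ode_solution Om v a b g -> a < t < b -> {for t, continuous g}.
Proof.
move=> sol tab; have [_ [gt _]] := sol t tab.
exact/differentiable_continuous/derivable1_diffP.
Qed.

Lemma ode_solution_eq_near a1 b1 g1 a2 b2 g2 s :
  ode_solution Om v a1 b1 g1 -> ode_solution Om v a2 b2 g2 ->
  a1 < s < b1 -> a2 < s < b2 -> g1 s = g2 s -> \forall u \near s, g1 u = g2 u.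
Proof.
move=> sol1 sol2 s1 s2 g12.
have [L L0 [r r0 [_ vlip]]] := C1_on_locally_lipschitz Om_open vC1 (sol1 s s1).1.
have near_ball a b g : ode_solution Om v a b g -> a < s < b -> g s = g1 s ->
    \forall u \near s, a < u < b /\ ball (g1 s) r (g u).
  move=> sol sab <-; near=> u; split; near: u.
    exact: near_in_itvoo.
  exact: ode_solution_continuous sol sab _ (nbhsx_ballx _ _ r0).
have D_near : \forall u \near s, is_derive (u : R) 1 (g1 - g2) (v (g1 u) - v (g2 u))
    /\ `|v (g1 u) - v (g2 u)| <= L * `|(g1 - g2) u|.
  near=> u.
  have [u1 b1u] : a1 < u < b1 /\ ball (g1 s) r (g1 u) by near: u; exact: near_ball.
  have [u2 b2u] : a2 < u < b2 /\ ball (g1 s) r (g2 u).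
    by near: u; apply: near_ball => //; rewrite g12.
  split; first exact: is_deriveB (sol1 u u1).2 (sol2 u u2).2.
  exact: (@vlip (g1 u, g2 u) (conj b1u b2u)).
have := deriv_dominated_eq0_near L0 _ D_near; rewrite !fctE g12 subrr => /(_ erefl).
by apply: filterS => u /eqP; rewrite subr_eq0 => /eqP.
Unshelve. all: by end_near.
Qed.

Lemma ode_solution_eq a1 b1 g1 a2 b2 g2 s :
  ode_solution Om v a1 b1 g1 -> ode_solution Om v a2 b2 g2 ->
  a1 < s < b1 -> a2 < s < b2 -> g1 s = g2 s ->
  forall t, a1 < t < b1 -> a2 < t < b2 -> g1 t = g2 t.
Proof.
move=> sol1 sol2 s1 s2 g12.
pose J := [set` `](Num.max a1 a2), (Num.min b1 b2)[].
have JE t : J t <-> a1 < t < b1 /\ a2 < t < b2.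
  rewrite /J /= in_itv /= gt_max lt_min.
  by split => [/andP[/andP[-> ->] /andP[-> ->]] | [/andP[-> ->] /andP[-> ->]]].
pose A := [set t | J t /\ g1 t = g2 t].
(* [A] is nonempty, open and closed in the connected interval [J]. *)
suff AJ : A = J by move=> t t1 t2; have [] : A t by rewrite AJ; exact/JE.
have J_conn : connected J by apply/connected_intervalP; exact: interval_is_interval.
apply: J_conn.
- by exists s; split => //; exact/JE.
- exists A; last by apply/esym/setIidr => t [].
  move=> t [Jt g12t]; have [t1 t2] := (JE t).1 Jt.
  near=> u; split; near: u; first exact: near_in_itvoo.
  exact: ode_solution_eq_near sol1 sol2 t1 t2 g12t.
- exists (closure A); first exact: closed_closure.
  apply/seteqP; split => [t At | t [Jt At]]; first by split; [case: At | exact: subset_closure].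
  split => //; have [t1 t2] := (JE t).1 Jt.
  apply/eqP/negPn/negP; rewrite -subr_eq0 => g12t.
  have D_cont : {for t, continuous (g1 - g2)}.
    exact: cvgB (ode_solution_continuous sol1 t1) (ode_solution_continuous sol2 t2).
  have [u [[_ g12u] /eqP]] := At _ (cvgr_neq0 _ D_cont g12t).
  by rewrite !fctE g12u subrr.
Unshelve. all: by end_near.
Qed.

Lemma flow_at_fun t x y1 y2 : flow_at Om v t x y1 -> flow_at Om v t x y2 -> y1 = y2.
Proof.
move=> [a1 [b1 [g1 [ab1 t1 sol1 g10 <-]]]] [a2 [b2 [g2 [ab2 t2 sol2 g20 <-]]]].
by apply: ode_solution_eq sol1 sol2 ab1 ab2 _ _ t1 t2; rewrite g10 g20.
Qed.

Lemma flow_in_not_out t x E : flow_in Om v t x E -> ~ flow_out Om v t x E.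
Proof. by move=> [y1 [f1 Ey1]] [y2 [f2]]; rewrite -(flow_at_fun f1 f2). Qed.

Lemma ode_solution_flow_in_near0 a b gam E (eps : R) :
  ode_solution Om v a b gam -> a < 0 < b -> 0 < eps ->
  (forall t, - eps < t < eps -> flow_in Om v t (gam 0) E) -> \forall t \near 0, E (gam t).
Proof.
move=> sol ab0 eps0 stays; near=> t.
have t_eps : - eps < t < eps by near: t; apply: near_in_itvoo; rewrite in_itv /= oppr_lt0 eps0.
have [y [gam_y Ey]] := stays t t_eps.
have gam_t : flow_at Om v t (gam 0) (gam t).
  by exists a, b, gam; split => //; near: t; exact: near_in_itvoo.
by rewrite (flow_at_fun gam_t gam_y).
Unshelve. all: by end_near.
Qed.

Lemma flow_out_cvg0_not_invariant (tm : nat -> R) x E (eps : R) : 0 < eps ->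
  tm m @[m --> \oo] --> 0 -> (forall m, flow_out Om v (tm m) x E) ->
  ~ (forall t, - eps < t < eps -> flow_in Om v t x E).
Proof.
move=> eps0 /cvgr_dist_lt/(_ eps eps0) tm_small out stays.
near \oo => m; apply: flow_in_not_out (stays (tm m) _) (out m).
by rewrite -ltr_norml -normrN -sub0r; near: m.
Unshelve. all: by end_near.
Qed.

End flow_uniqueness.

Section local_maximum.
Context {R : realType}.
Implicit Types (f phi : R -> R) (x c : R).

Lemma local_max_deriv_eq0 f phi x :
  (\forall t \near x, f t <= f x) -> (\forall t \near x, is_derive (t : R) 1 f (phi t)) ->
  phi x = 0.
Proof.
move=> fmax fD.
have /nbhs_ballP[r /= r0 xr] : \forall t \near x, f t <= f x /\ is_derive (t : R) 1 f (phi t).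
  exact: filterI fmax fD.
have inr t : t \in `]x - r, x + r[ -> ball x r t.
  by rewrite -ball_normE /= in_itv /= ltr_norml => /andP[? ?]; apply/andP; split; lra.
have xin : x \in `]x - r, x + r[ by rewrite in_itv /=; apply/andP; split; lra.
have [_ <-] : is_derive x 1 f 0.
  apply: (@derive1_at_max _ f (x - r) (x + r)) => // [|t /inr/xr[_ []] //|t /inr/xr[] //].
  lra.
by have [_ ->] := (xr x (ballxx _ r0)).2.
Qed.

Lemma deriv_gt0_increasing_right phi x c : is_derive x 1 phi c -> 0 < c ->
  exists2 r, 0 < r & forall u, x < u < x + r -> phi x < phi u.
Proof.
move=> [phiD <-] c0.
have quot : (fun h => h^-1 *: (phi (h *: 1 + x) - phi x)) @ 0^' --> 'D_1 phi x by [].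
move/cvgr_gt: quot => /(_ 0 c0) /nbhs_ballP[r /= r0 quot_gt0].
exists r => // u /andP[xu uxr].
have : ball (0 : R) r (u - x) by rewrite -ball_normE /= sub0r normrN ger0_norm; lra.
move/quot_gt0 => /(_ _); rewrite subr_eq0 gt_eqF // => /(_ isT).
by rewrite scaler1 subrK pmulr_rgt0 ?invr_gt0 ?subr_gt0.
Qed.

Lemma local_max_deriv2_le0 f phi x c :
  (\forall t \near x, f t <= f x) -> (\forall t \near x, is_derive (t : R) 1 f (phi t)) ->
  is_derive x 1 phi c -> c <= 0.
Proof.
move=> fmax fD phiD; rewrite leNgt; apply/negP => c0.
have phix0 := local_max_deriv_eq0 fmax fD.
have [r1 r10 phi_gt0] := deriv_gt0_increasing_right phiD c0.
have /nbhs_ballP[r2 /= r20 xr2] : \forall t \near x, f t <= f x /\ is_derive (t : R) 1 f (phi t).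
  exact: filterI fmax fD.
have [t [t0 tr1 tr2]] : exists t : R, [/\ 0 < t, t < r1 & t < r2].
  exists (Num.min r1 r2 / 2).
  have m1 : Num.min r1 r2 <= r1 by rewrite ge_min lexx.
  have m2 : Num.min r1 r2 <= r2 by rewrite ge_min lexx orbT.
  have m0 : 0 < Num.min r1 r2 by rewrite lt_min r10.
  by split; lra.
have xr2_itv u : x <= u <= x + t -> f u <= f x /\ is_derive u 1 f (phi u).
  by move=> /andP[? ?]; apply: xr2; rewrite -ball_normE /= ltr_norml; apply/andP; split; lra.
have fC : {within `[x, x + t], continuous f}.
  by apply: derivable_within_continuous => u; rewrite in_itv => /xr2_itv[_ []].
have fD' u : u \in `]x, x + t[ -> is_derive u 1 f (phi u).
  by rewrite in_itv /= => /andP[? ?]; apply: (xr2_itv u _).2; apply/andP; split; lra.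
have xt : x < x + t by lra.
have [u /[!in_itv] /= /andP[xu ut] fxt] := MVT xt fD' fC.
have : f (x + t) <= f x by apply: (xr2_itv _ _).1; apply/andP; split; lra.
rewrite -subr_le0 fxt addrAC subrr add0r pmulr_lle0 // leNgt -phix0 phi_gt0 //.
by apply/andP; split; lra.
Qed.

End local_maximum.

Section curvature.
Context {R : realType} {n : nat}.
Notation V := 'rV[R]_n.

Lemma is_derive_lie_derivative_along (e : V -> R) (v : V -> V) (gam : R -> V) (s : R) :
  is_derive s 1 gam (v (gam s)) -> differentiable v (gam s) ->
  (forall u, differentiable (fun y => 'd e y u) (gam s)) ->
  is_derive s 1 (fun t => 'd e (gam t) (v (gam t)))
    ('d (fun y => 'd e y (v (gam s))) (gam s) (v (gam s))
     + 'd e (gam s) ('d v (gam s) (v (gam s)))).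
Proof.
move=> gamD vD eD; set x := gam s.
pose P j y := 'd e y (delta_mx 0 j).
have diff_coord (y w : V) : 'd e y w = \sum_j w 0 j * P j y.
  by rewrite {1}(row_sum_delta w) linear_sum; apply: eq_bigr => j _; rewrite linearZ.
have -> : (fun t => 'd e (gam t) (v (gam t)))
    = \sum_j ((fun t => v (gam t) 0 j) * (P j \o gam)).
  by apply/funext => t; rewrite diff_coord fct_sumE.
have vjD j : is_derive s 1 (fun t => v (gam t) 0 j) ('d v x (v x) 0 j).
  exact: is_derive_mx_entry (is_derive_comp_differentiable gamD vD).
have PjD j : is_derive s 1 (P j \o gam) ('d (P j) x (v x)).
  exact: is_derive_comp_differentiable gamD (eD _).
apply: is_derive_eq; rewrite big_split /=; congr (_ + _).
- rewrite -[X in _ = X]deriveE; last exact: eD.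
  have -> : (fun y => 'd e y (v x)) = \sum_j (v x 0 j \*: P j).
    by apply/funext => y; rewrite diff_coord fct_sumE.
  have PjZD j : derivable (v x 0 j \*: P j) x (v x).
    exact/derivableZ/diff_derivable/eD.
  rewrite derive_sum //; apply: eq_bigr => j _.
  have Pjx : differentiable (P j) x := eD _.
  by rewrite deriveZ ?deriveE //; exact: diff_derivable.
- by rewrite diff_coord; apply: eq_bigr => j _; rewrite mulrC.
Qed.

Lemma curvature_bound_fun_not_touching (Om W : set V) (v : V -> V) (e : V -> R) a b
    (gam : R -> V) :
  C1_on Om v -> curvature_bound_fun v W e -> ode_solution Om v a b gam -> a < 0 < b ->
  W (gam 0) -> e (gam 0) = 0 -> ~ \forall t \near 0, e (gam t) <= 0.
Proof.
move=> vC1 [W_open [eC2 curv]] sol ab0 W0 e0 e_le0.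
have [Om0 gamD0] := sol 0 ab0.
have near_W : \forall t \near 0, a < t < b /\ W (gam t).
  near=> t; split; near: t.
    exact: near_in_itvoo.
  exact: ode_solution_continuous sol ab0 _ (W_open _ W0).
pose phi t := 'd e (gam t) (v (gam t)).
have fD : \forall t \near 0, is_derive (t : R) 1 (e \o gam) (phi t).
  apply: filterS near_W => t [/sol[_ gamDt] Wt].
  exact: is_derive_comp_differentiable gamDt (eC2.1.1 _ Wt).
have fmax : \forall t \near 0, (e \o gam) t <= (e \o gam) 0 by rewrite /= e0.
have phiD := is_derive_lie_derivative_along gamD0 (vC1.1 _ Om0) (fun u => (eC2.2 u).1 _ W0).
have := local_max_deriv2_le0 fmax fD phiD; rewrite leNgt curv //.
exact: local_max_deriv_eq0 fmax fD.
Unshelve. all: by end_near.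
Qed.

End curvature.

Section sublevel_sets.
Context {R : realType} {n r : nat}.
Notation V := 'rV[R]_n.
Variables (Om : set V) (e : 'I_r -> V -> R).
Hypothesis e_cont : forall k x, Om x -> {for x, continuous (e k)}.

Lemma sublevel_closed_in : closed_in Om [set x | Om x /\ forall k, e k x <= 0].
Proof.
split=> [x [] //|x [x_cl Omx]]; split=> // k; rewrite leNgt; apply/negP => ekx.
move/cvgr_gt: (@e_cont k x Omx) => /(_ 0 ekx) /x_cl[y [[_ Ey] eky]].
by move: (Ey k); rewrite leNgt eky.
Qed.

Lemma boundary_in_sublevel_active x : open Om ->
  boundary_in Om [set x | Om x /\ forall k, e k x <= 0] x -> exists k, e k x = 0.
Proof.
move=> Om_open [[x_cl Omx] x_int].
have [_ ex_le0] := sublevel_closed_in.2 x (conj x_cl Omx).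
apply: contrapT => none; apply: x_int.
have ex_lt0 k : e k x < 0.
  by rewrite lt_neqAle ex_le0 andbT; apply/eqP => ekx; apply: none; exists k.
have e_neg : \forall y \near x, forall k, e k y < 0.
  apply: (@filter_forall _ _ (fun k y => e k y < 0) (nbhs x) _) => k.
  by move/cvgr_lt: (@e_cont k x Omx); apply.
rewrite /interior; near=> y; split; first by near: y; exact: Om_open.
suff y_neg : forall k, e k y < 0 by move=> k; exact/ltW/y_neg.
by near: y.
Unshelve. all: by end_near.
Qed.

End sublevel_sets.

Theorem corollary2p3 (R : realType) (n r : nat) (Om : set 'rV[R]_n)
  (v : 'rV[R]_n -> 'rV[R]_n) (e : 'I_r -> 'rV[R]_n -> R)
  (Z : 'I_r -> set 'rV[R]_n) :
  open Om ->
  C1_on Om v ->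
  (forall k x, Om x -> {for x, continuous (e k)}) ->
  let E := [set x | Om x /\ forall k, e k x <= 0] in
  (forall k, closed_in Om (Z k) /\ Z k `<=` boundary_in Om E) ->
  (forall k, exists W : set 'rV[R]_n,
     [/\ W `<=` Om,
         [set x | e k x = 0] `&` boundary_in Om E `\` Z k `<=` W
       & curvature_bound_fun v W (e k)]) ->
  (forall k, Z k `<=` exit_set Om v E `|` entrance_set Om v E) ->
  bound_set Om v E.
Proof.
move=> Om_open vC1 e_cont E _ e_curv Z_exit_entrance.
split; first exact: sublevel_closed_in.
move=> eps eps0 [x [x_bd stays]].
case: (pselect (exists k, Z k x)) => [[k /Z_exit_entrance[]] | noZ].
- move=> [_ [ep [_ ep0 ep_out]]].
  by apply: (flow_out_cvg0_not_invariant Om_open vC1 eps0 ep0 ep_out).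
- move=> [_ [ep [_ ep0 ep_out]]].
  apply: (flow_out_cvg0_not_invariant (tm := fun m => - ep m) Om_open vC1 eps0 _ ep_out stays).
  by rewrite -oppr0; exact: cvgN.
have [k ekx] := boundary_in_sublevel_active e_cont Om_open x_bd.
have [W [_ W_bd W_curv]] := e_curv k.
have Wx : W x by apply: W_bd; split=> [|Zkx]; [split | apply: noZ; exists k].
have eps_0 : - eps < 0 < eps by rewrite oppr_lt0 eps0.
have [_ [[a [b [gam [ab0 _ sol gam0 _]]]] _]] := stays 0 eps_0.
apply: (curvature_bound_fun_not_touching vC1 W_curv sol ab0); rewrite ?gam0 //.
rewrite -gam0 in stays; have gamE := ode_solution_flow_in_near0 Om_open vC1 sol ab0 eps0 stays.
by apply: filterS gamE => t [_]; apply.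
Qed.
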